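(* Let $\lambda\in\Lambda$ with associated $T_\lambda$. Let $T_2\ge e^{900}(1+T_\lambda)$ be such that $t^{2/3}\lambda(t)<\frac{t}{100}$ for all $t\ge T_2$, and let $T_0\ge T_2$. Define, for $t\ge T_0$ and $r>0$, $$w_1(t,r)=\frac{-2}{r}\big(\lambda(t+r)-\lambda(t)-r\lambda'(t+r)\big)+\frac{2}{r}\int_{t+r}^{\infty}\lambda''(s)\Big((s-t)-\sqrt{(s-t)^2-r^2}\Big)ds.$$ Then there is $C>0$, independent of $T_0$, such that for all $0\le k\le 8$, $0\le j\le 3$, $t\ge T_0$, $r>0$: $$|\partial_t^k\partial_r^j w_1(t,r)|\le\begin{cases}\dfrac{C r^{1-j}\lambda(t)(\log(t)+|\log(r)|)}{t^{2+k}}, & r\le t,\\[2mm] \dfrac{C}{r^{1+j}t^k}\sup_{x\in[t,t+r]}\lambda(x), & r\ge t.\end{cases}$$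
   Context: $\Lambda$ is the set of positive $\lambda\in C^\infty((50,\infty))$ for which there exist $T_\lambda>100$, constants $C_l,C_u,C_2\ge0$ and $C_k\ge0$ ($k\ge3$) such that for all $t\ge T_\lambda$: $-\frac{C_l}{t}\le\frac{\lambda'(t)}{\lambda(t)}\le\frac{C_u}{t}$ and $\frac{|\lambda^{(k)}(t)|}{\lambda(t)}\le\frac{C_k}{t^k}$ for $k\ge2$; and, with $M=\max\{C_l,C_u\}$: (i) $0\le C_u<\frac1{30}-\frac{C_l}{5}$; (ii) $\sqrt{C_\rho}\cdot\frac{179}{267}\Big(M(1+2\|\mathcal K\|_{\mathcal L(L^2_\rho)})+M^2\big(\frac14+2\|[\xi\partial_\xi,\mathcal K]\|_{\mathcal L(L^2_\rho)}+\|\mathcal K\|^2_{\mathcal L(L^2_\rho)}\big)+C_2\big(\frac12+\|\mathcal K\|_{\mathcal L(L^2_\rho)}\big)+4\big(M^2+\frac{C_2}{3}(3+2\pi^2)\big)\Big)<\frac13$; (iii) $M<\frac{1}{3\sqrt{C_\rho}}\cdot\frac{1513}{1044}\cdot\frac{1}{1+2\|\mathcal K\|_{\mathcal L(L^{2,1/2}_\rho)}}$. Here $\mathcal K$ is the Krieger–Schlag–Tataru transference operator (defined by $\mathcal{F}(R\partial_Ru)=-2\xi\partial_\xi\mathcal F u+\mathcal K\mathcal F u$) for the distorted Fourier transform $\mathcal F$ associated with $-\partial_R^2+\frac{3}{4R^2}-\frac{8}{(1+R^2)^2}$ on $L^2((0,\infty),dR)$, whose spectral density is $\rho$; $L^{2,\alpha}_\rho$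 has norm $\|f\langle\xi\rangle^\alpha\sqrt\rho\|_{L^2(d\xi)}$, $L^2_\rho=L^{2,0}_\rho$; and $C_\rho>0$ is a fixed constant with $\rho(y)/\rho(z)\le C_\rho(y/z+z/y)$ for all $y,z>0$. *)

From Stdlib Require Import Reals Lra.
From Coquelicot Require Import Coquelicot.
Open Scope R_scope.

(* The class Lambda.  The operator norms ||K||_{L(L^2_rho)} (nK),
   ||K||_{L(L^{2,1/2}_rho)} (nKh), ||[xi d_xi, K]||_{L(L^2_rho)} (nC) and the
   constant C_rho (Crho) are passed as real parameters. *)
Definition in_Lambda (nK nKh nC Crho : R) (lam : R -> R) (Tl : R) : Prop :=
  (forall x, 50 < x -> 0 < lam x) /\
  (forall (k : nat) x, 50 < x -> ex_derive_n lam k x) /\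
  100 < Tl /\
  exists (Cl Cu C2 : R) (Ck : nat -> R),
    0 <= Cl /\ 0 <= Cu /\ 0 <= C2 /\ (forall k, (3 <= k)%nat -> 0 <= Ck k) /\
    (forall t, Tl <= t ->
        - Cl / t <= Derive lam t / lam t /\ Derive lam t / lam t <= Cu / t) /\
    (forall t, Tl <= t -> Rabs (Derive_n lam 2 t) / lam t <= C2 / t ^ 2) /\
    (forall (k : nat) t, (3 <= k)%nat -> Tl <= t ->
        Rabs (Derive_n lam k t) / lam t <= Ck k / t ^ k) /\
    (let M := Rmax Cl Cu in
     Cu < 1/30 - Cl/5 /\
     sqrt Crho * (179/267) *
       (M * (1 + 2 * nK)
        + M ^ 2 * (1/4 + 2 * nC + nK ^ 2)
        + C2 * (1/2 + nK)
        + 4 * (M ^ 2 + C2 / 3 * (3 + 2 * PI ^ 2))) < 1/3 /\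
     M < 1 / (3 * sqrt Crho) * (1513/1044) * (1 / (1 + 2 * nKh))).

Definition w1 (lam : R -> R) (t r : R) : R :=
  (-2) / r * (lam (t + r) - lam t - r * Derive lam (t + r))
  + 2 / r * RInt_gen
      (fun s => Derive_n lam 2 s * ((s - t) - sqrt ((s - t) ^ 2 - r ^ 2)))
      (at_point (t + r)) (Rbar_locally p_infty).

Definition dw1 (lam : R -> R) (k j : nat) (t r : R) : R :=
  Derive_n (fun t' => Derive_n (fun r' => w1 lam t' r') j r) k t.

Definition sup_on (lam : R -> R) (a b : R) : R :=
  real (Lub_Rbar (fun y => exists x, a <= x <= b /\ y = lam x)).

From Stdlib Require Import Reals Lra Lia.
From Coquelicot Require Import Coquelicot.
Open Scope R_scope.

(* The substitution s = t + r v writes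
     w_1(t, r) = -2 u(t, r) / r + 2 r ∫_1^∞ λ''(t + r v) g(v) dv,
     u(t, r) = λ(t + r) - λ(t) - r λ'(t + r),   g(v) = v - √(v² - 1) ≤ 1 / v.
   Differentiating in t raises the order of every derivative of λ by one, while
   ∂_r u = - r λ''(t + r) and ∂_r of the moment ∫_1^∞ λ^(m)(t + r v) v^p g(v) dv is the moment
   with (m + 1, p + 1).  Hence ∂_t^k ∂_r^j w_1 is an explicit combination of λ^(k+i)(t + r),
   u and such moments.  The bounds |λ^(n)(x)| ≤ B λ(x) / x^n and the monotonicity of λ(x) / x
   dominate every moment integrand by a multiple of 1 / ((a + b v) v), whose integral over
   [1, ∞) is ln((a + b) / b) / a.  This justifies differentiating under the integral sign and
   bounds the moments through ln((t + r) / r), which is at most 2 (ln t + |ln r|) when r ≤ t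
   and at most t / r when t ≤ r. *)

(** * Improper integrals over [1, +oo) with an integrable majorant *)

Definition int_1_oo (f : R -> R) : R := RInt_gen f (at_point 1) (Rbar_locally p_infty).

Lemma is_lim_p_infty_ball (f : R -> R) (l eps : R) :
  is_lim f p_infty l -> 0 < eps -> exists M, forall w, M < w -> Rabs (f w - l) < eps.
Proof.
  intros Hf Heps.
  destruct (Hf (fun y => Rabs (y - l) < eps)) as [M HM].
  - exists (mkposreal eps Heps). intros y Hy. exact Hy.
  - exists M. exact HM.
Qed.

Lemma is_RInt_gen_of_is_lim (f : R -> R) (a l : R) :
  (forall w, a <= w -> ex_RInt f a w) ->
  is_lim (fun w => RInt f a w) p_infty l ->
  is_RInt_gen f (at_point a) (Rbar_locally p_infty) l.
Proof.
  intros Hex Hl P HP.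
  destruct (Hl P HP) as [M HM].
  apply Filter_prod with (Q := fun x => x = a) (R := fun w => Rmax a M < w).
  - reflexivity.
  - exists (Rmax a M). auto.
  - intros x w -> Hw. exists (RInt f a w). split.
    + apply (@RInt_correct R_CompleteNormedModule), Hex. pose proof (Rmax_l a M). lra.
    + apply HM. pose proof (Rmax_r a M). lra.
Qed.

Lemma taylor_remainder_le (f f1 f2 : R -> R) (x0 e M : R) :
  (forall x, Rabs (x - x0) <= Rabs e ->
     is_derive f x (f1 x) /\ is_derive f1 x (f2 x) /\ Rabs (f2 x) <= M) ->
  Rabs (f (x0 + e) - f x0 - e * f1 x0) <= e * e * M.
Proof.
  intros Hf.
  assert (HM : 0 <= M).
  { assert (Hx0 : Rabs (x0 - x0) <= Rabs e) by (rewrite Rminus_diag, Rabs_R0; apply Rabs_pos).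
    pose proof (proj2 (proj2 (Hf x0 Hx0))). pose proof (Rabs_pos (f2 x0)). lra. }
  assert (Hf1 : forall y, Rabs (y - x0) <= Rabs e -> Rabs (f1 y - f1 x0) <= Rabs e * M).
  { intros y Hy.
    destruct (MVT_cor4 f1 f2 x0 (Rabs e)) with (b := y) as [c [Hc Hcx]]; auto.
    - intros c Hc. apply Hf. exact Hc.
    - rewrite Hc, Rabs_mult, Rmult_comm.
      apply Rmult_le_compat; try apply Rabs_pos; [lra|apply Hf; lra]. }
  destruct (MVT_cor4 (fun y => f y - y * f1 x0) (fun y => f1 y - f1 x0) x0 (Rabs e))
    with (b := x0 + e) as [c [Hc Hcx]].
  - intros c Hc. apply (is_derive_minus f (fun y => y * f1 x0)); [apply Hf; exact Hc|].
    auto_derive; auto; ring.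
  - replace (x0 + e - x0) with e by ring. lra.
  - replace (x0 + e - x0) with e in * by ring.
    replace (f (x0 + e) - f x0 - e * f1 x0)
      with (f (x0 + e) - (x0 + e) * f1 x0 - (f x0 - x0 * f1 x0)) by ring.
    rewrite Hc, Rabs_mult.
    replace (e * e * M) with (Rabs e * M * Rabs e)
      by (rewrite <- (Rabs_right (e * e)), Rabs_mult by nra; ring).
    apply Rmult_le_compat_r; [apply Rabs_pos|]. apply Hf1. exact Hcx.
Qed.

Section DominatedIntegral.

Variables (g G : R -> R) (lG : R).
Hypothesis G_derive : forall v, 1 <= v -> is_derive G v (g v).
Hypothesis g_cont : forall v, 1 <= v -> continuous g v.
Hypothesis G_lim : is_lim G p_infty lG.

Section Dominated.

Variables (h : R -> R) (K : R).
Hypothesis h_cont : forall v, 1 <= v -> continuous h v.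
Hypothesis h_dominated : forall v, 1 <= v -> Rabs (h v) <= K * g v.

Lemma ex_RInt_dominated u w : 1 <= u -> u <= w -> ex_RInt h u w.
Proof.
  intros Hu Huw. apply (@ex_RInt_continuous R_CompleteNormedModule).
  intros z Hz. rewrite Rmin_left in Hz by lra. apply h_cont. lra.
Qed.

Lemma abs_RInt_dominated u w : 1 <= u -> u <= w -> Rabs (RInt h u w) <= K * (G w - G u).
Proof.
  intros Hu Huw.
  assert (HKg : is_RInt (fun v => K * g v) u w (K * (G w - G u))).
  { replace (K * (G w - G u)) with (minus ((fun v => K * G v) w) ((fun v => K * G v) u))
      by (unfold minus, plus, opp; simpl; ring).
    apply (is_RInt_derive (fun v => K * G v)).
    - intros x Hx. rewrite Rmin_left, Rmax_right in Hx by lra.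
      apply is_derive_scal, G_derive. lra.
    - intros x Hx. rewrite Rmin_left, Rmax_right in Hx by lra.
      apply (@continuous_scal_r _ R_AbsRing R_NormedModule), g_cont. lra. }
  eapply Rle_trans; [apply abs_RInt_le; auto; apply ex_RInt_dominated; lra|].
  rewrite <- (is_RInt_unique _ _ _ _ HKg).
  apply RInt_le; auto.
  - apply (@ex_RInt_continuous R_CompleteNormedModule).
    intros z Hz. rewrite Rmin_left, Rmax_right in Hz by lra.
    apply (continuous_comp h Rabs); [apply h_cont; lra | apply continuous_Rabs].
  - eexists; exact HKg.
  - intros x Hx. apply h_dominated. lra.
Qed.

Lemma RInt_dominated_cvg : exists l : R, is_lim (fun w => RInt h 1 w) p_infty l.
Proof.
  apply (proj1 (@filterlim_locally_cauchy R R_CompleteSpace (Rbar_locally p_infty) _ _)).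
  intros eps.
  assert (Heps : 0 < eps / (2 * (Rabs K + 1))).
  { apply Rdiv_lt_0_compat; [apply cond_pos|]. pose proof (Rabs_pos K). lra. }
  destruct (is_lim_p_infty_ball G lG _ G_lim Heps) as [M HM].
  exists (fun w => Rmax 1 M < w). split; [exists (Rmax 1 M); auto|].
  assert (Hcauchy : forall u w, Rmax 1 M < u -> u <= w -> Rabs (RInt h 1 w - RInt h 1 u) < eps).
  { intros u w Hu Huw.
    pose proof (Rmax_l 1 M). pose proof (Rmax_r 1 M).
    rewrite <- (RInt_Chasles h 1 u w) by (apply ex_RInt_dominated; lra).
    change (Rabs (RInt h 1 u + RInt h u w - RInt h 1 u) < eps).
    rewrite Rplus_minus_l.
    assert (HGuw : Rabs (G w - G u) < 2 * (eps / (2 * (Rabs K + 1)))).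
    { pose proof (HM u ltac:(lra)). pose proof (HM w ltac:(lra)).
      replace (G w - G u) with ((G w - lG) - (G u - lG)) by ring.
      eapply Rle_lt_trans; [apply Rabs_triang|]. rewrite Rabs_Ropp. lra. }
    replace (2 * (eps / (2 * (Rabs K + 1)))) with (eps / (Rabs K + 1)) in HGuw
      by (field; pose proof (Rabs_pos K); lra).
    eapply Rle_lt_trans; [apply abs_RInt_dominated; lra|].
    eapply Rle_lt_trans; [apply Rle_abs|]. rewrite Rabs_mult.
    pose proof (Rabs_pos K). pose proof (Rabs_pos (G w - G u)). pose proof (cond_pos eps).
    apply (Rmult_lt_compat_l (Rabs K + 1)) in HGuw; [|lra].
    replace ((Rabs K + 1) * (eps / (Rabs K + 1))) with (pos eps) in HGuw by (field; lra).
    nra. }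
  intros u w Hu Hw. change (Rabs (RInt h 1 w - RInt h 1 u) < eps).
  destruct (Rle_or_lt u w).
  - apply Hcauchy; auto.
  - rewrite Rabs_minus_sym. apply Hcauchy; lra.
Qed.

Lemma int_1_oo_dominated :
  is_RInt_gen h (at_point 1) (Rbar_locally p_infty) (int_1_oo h) /\
  Rabs (int_1_oo h) <= K * (lG - G 1).
Proof.
  destruct RInt_dominated_cvg as [l Hl].
  assert (Hint : is_RInt_gen h (at_point 1) (Rbar_locally p_infty) l).
  { apply is_RInt_gen_of_is_lim; auto. intros w Hw. apply ex_RInt_dominated; lra. }
  unfold int_1_oo. rewrite (is_RInt_gen_unique _ _ Hint). split; auto.
  assert (Habs : is_lim (fun w => Rabs (RInt h 1 w)) p_infty (Rabs l))
    by (apply (is_lim_comp_continuous (fun w => RInt h 1 w) Rabs); auto; apply continuous_Rabs).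
  assert (HKG : is_lim (fun w => K * (G w - G 1)) p_infty (K * (lG - G 1))).
  { apply (is_lim_scal_l _ K _ (lG - G 1)). apply (is_lim_minus' _ _ _ lG (G 1)); auto.
    apply is_lim_const. }
  apply (filterlim_le (F := Rbar_locally p_infty) (fun w => Rabs (RInt h 1 w))
           (fun w => K * (G w - G 1)) (Rabs l) (K * (lG - G 1))); auto.
  exists 1. intros w Hw. apply abs_RInt_dominated; lra.
Qed.

End Dominated.

Section Parametric.

Variables (h h1 h2 : R -> R -> R) (x0 d K : R).
Hypothesis h_derive :
  forall x v, Rabs (x - x0) < d -> 1 <= v -> is_derive (fun y => h y v) x (h1 x v).
Hypothesis h1_derive :
  forall x v, Rabs (x - x0) < d -> 1 <= v -> is_derive (fun y => h1 y v) x (h2 x v).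
Hypothesis h_cont :
  forall x v, Rabs (x - x0) < d -> 1 <= v -> continuous (h x) v /\ continuous (h1 x) v.
Hypothesis h_dominated : forall x v, Rabs (x - x0) < d -> 1 <= v ->
  Rabs (h x v) <= K * g v /\ Rabs (h1 x v) <= K * g v /\ Rabs (h2 x v) <= K * g v.

Lemma int_1_oo_param_taylor e : Rabs e < d ->
  Rabs (int_1_oo (h (x0 + e)) - int_1_oo (h x0) - e * int_1_oo (h1 x0))
  <= e * e * (K * (lG - G 1)).
Proof.
  intros He.
  assert (Hx0 : Rabs (x0 - x0) < d) by (rewrite Rminus_diag, Rabs_R0; pose proof (Rabs_pos e); lra).
  assert (Hxe : Rabs (x0 + e - x0) < d) by (replace (x0 + e - x0) with e by ring; lra).
  assert (Hint : forall x f, Rabs (x - x0) < d -> (f = h x \/ f = h1 x) ->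
     is_RInt_gen f (at_point 1) (Rbar_locally p_infty) (int_1_oo f)).
  { intros x f Hx [-> | ->]; apply (int_1_oo_dominated _ K); intros v Hv;
      first [apply h_cont | apply h_dominated]; auto. }
  set (rem := fun v => h (x0 + e) v - h x0 v - e * h1 x0 v).
  assert (Hlin : is_RInt_gen rem (at_point 1) (Rbar_locally p_infty)
     (int_1_oo (h (x0 + e)) - int_1_oo (h x0) - e * int_1_oo (h1 x0))).
  { apply (is_RInt_gen_minus (V := R_NormedModule)
             (fun v => h (x0 + e) v - h x0 v) (fun v => e * h1 x0 v)).
    - apply (is_RInt_gen_minus (V := R_NormedModule));
        [apply (Hint (x0 + e)) | apply (Hint x0)]; auto.
    - apply (is_RInt_gen_scal (V := R_NormedModule)). apply (Hint x0); auto. }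
  rewrite <- (is_RInt_gen_unique _ _ Hlin), <- Rmult_assoc.
  apply (int_1_oo_dominated rem (e * e * K)).
  - intros v Hv. unfold rem.
    apply (@continuous_minus R_UniformSpace R_AbsRing R_NormedModule);
      [apply (@continuous_minus R_UniformSpace R_AbsRing R_NormedModule)|];
      try (apply h_cont; auto).
    apply (@continuous_scal_r _ R_AbsRing R_NormedModule), h_cont; auto.
  - intros v Hv. rewrite Rmult_assoc.
    apply (taylor_remainder_le (fun y => h y v) (fun y => h1 y v) (fun y => h2 y v)).
    intros x Hx. assert (Rabs (x - x0) < d) by lra.
    repeat split; try apply h_derive; try apply h1_derive; try apply h_dominated; auto.
Qed.

Lemma is_derive_int_1_oo_param :
  0 < d -> is_derive (fun x => int_1_oo (h x)) x0 (int_1_oo (h1 x0)).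
Proof.
  intros Hd.
  set (c := Rabs (K * (lG - G 1)) + 1).
  assert (Hc : 0 < c) by (unfold c; pose proof (Rabs_pos (K * (lG - G 1))); lra).
  apply is_derive_Reals. intros eps Heps.
  assert (Hdel : 0 < Rmin d (eps / c)) by (apply Rmin_pos; [lra|apply Rdiv_lt_0_compat; lra]).
  exists (mkposreal _ Hdel). intros e He0 He. simpl in He.
  pose proof (Rmin_l d (eps / c)). pose proof (Rmin_r d (eps / c)).
  assert (Hec : Rabs e * c < eps).
  { replace eps with (eps / c * c) by (field; lra). apply Rmult_lt_compat_r; lra. }
  pose proof (int_1_oo_param_taylor e ltac:(lra)) as Htaylor.
  set (A := int_1_oo (h (x0 + e))) in *. set (B := int_1_oo (h x0)) in *.
  set (C := int_1_oo (h1 x0)) in *.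
  assert (He' : 0 < Rabs e) by (apply Rabs_pos_lt; auto).
  replace ((A - B) / e - C) with ((A - B - e * C) / e) by (field; auto).
  unfold Rdiv. rewrite Rabs_mult, Rabs_inv.
  apply (Rmult_lt_reg_r (Rabs e)); auto. rewrite Rmult_assoc, Rinv_l, Rmult_1_r by lra.
  rewrite <- (Rabs_right (e * e)), Rabs_mult in Htaylor by nra.
  assert (HKc : K * (lG - G 1) < c) by (unfold c; pose proof (Rle_abs (K * (lG - G 1))); lra).
  eapply Rle_lt_trans; [exact Htaylor|].
  apply Rle_lt_trans with (Rabs e * Rabs e * c); [apply Rmult_le_compat_l; nra|].
  rewrite (Rmult_comm eps). rewrite Rmult_assoc. apply Rmult_lt_compat_l; lra.
Qed.

End Parametric.

End DominatedIntegral.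

Definition dom_kernel (a b v : R) : R := / ((a + b * v) * v).

Definition dom_kernel_primitive (a b v : R) : R := - / a * ln (a / v + b).

Section DomKernel.

Variables a b : R.
Hypotheses (a_pos : 0 < a) (b_pos : 0 < b).

Lemma dom_kernel_pos v : 0 < v -> 0 < dom_kernel a b v.
Proof. intros Hv. unfold dom_kernel. apply Rinv_0_lt_compat. nra. Qed.

Lemma dom_kernel_continuous v : 0 < v -> continuous (dom_kernel a b) v.
Proof.
  intros Hv. apply (@ex_derive_continuous R_AbsRing R_NormedModule). unfold dom_kernel.
  auto_derive. nra.
Qed.

Lemma is_derive_dom_kernel_primitive v :
  0 < v -> is_derive (dom_kernel_primitive a b) v (dom_kernel a b v).
Proof.
  intros Hv. unfold dom_kernel_primitive, dom_kernel.
  assert (0 < a / v + b) by (assert (0 < a / v) by (apply Rdiv_lt_0_compat; lra); lra).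
  auto_derive.
  - repeat split; lra.
  - field. repeat split; try lra. nra.
Qed.

Lemma is_lim_dom_kernel_primitive : is_lim (dom_kernel_primitive a b) p_infty (- / a * ln b).
Proof.
  unfold dom_kernel_primitive.
  apply (is_lim_scal_l (fun v => ln (a / v + b)) (- / a) p_infty (ln b)).
  apply (is_lim_comp_continuous (fun v => a / v + b) ln p_infty b); [|apply continuous_ln; lra].
  replace (Finite b) with (Rbar_plus (Rbar_mult a 0) b) by (simpl; f_equal; ring).
  apply (is_lim_plus _ _ p_infty (Rbar_mult a 0) b); [|apply is_lim_const|reflexivity].
  apply is_lim_scal_l.
  replace (Finite 0) with (Rbar_inv p_infty) by reflexivity.
  apply is_lim_inv; [apply is_lim_id|discriminate].
Qed.

End DomKernel.

Lemma int_1_oo_dom_kernel (a b K : R) (h : R -> R) : 0 < a -> 0 < b ->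
  (forall v, 1 <= v -> continuous h v) ->
  (forall v, 1 <= v -> Rabs (h v) <= K * dom_kernel a b v) ->
  is_RInt_gen h (at_point 1) (Rbar_locally p_infty) (int_1_oo h) /\
  Rabs (int_1_oo h) <= K * (/ a * (ln (a + b) - ln b)).
Proof.
  intros Ha Hb Hh Hdom.
  replace (/ a * (ln (a + b) - ln b)) with (- / a * ln b - dom_kernel_primitive a b 1)
    by (unfold dom_kernel_primitive; rewrite Rdiv_1_r; ring).
  apply (int_1_oo_dominated (dom_kernel a b)); auto.
  - intros v Hv. apply is_derive_dom_kernel_primitive; lra.
  - intros v Hv. apply dom_kernel_continuous; lra.
  - apply is_lim_dom_kernel_primitive; lra.
Qed.

Lemma is_derive_int_1_oo_dom_kernel (a b d K x0 : R) (h h1 h2 : R -> R -> R) :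
  0 < a -> 0 < b -> 0 < d ->
  (forall x v, Rabs (x - x0) < d -> 1 <= v -> is_derive (fun y => h y v) x (h1 x v)) ->
  (forall x v, Rabs (x - x0) < d -> 1 <= v -> is_derive (fun y => h1 y v) x (h2 x v)) ->
  (forall x v, Rabs (x - x0) < d -> 1 <= v -> continuous (h x) v /\ continuous (h1 x) v) ->
  (forall x v, Rabs (x - x0) < d -> 1 <= v ->
     Rabs (h x v) <= K * dom_kernel a b v /\ Rabs (h1 x v) <= K * dom_kernel a b v /\
     Rabs (h2 x v) <= K * dom_kernel a b v) ->
  is_derive (fun x => int_1_oo (h x)) x0 (int_1_oo (h1 x0)).
Proof.
  intros Ha Hb Hd Hh Hh1 Hc Hdom.
  refine (is_derive_int_1_oo_param _ _ (- / a * ln b) _ _ _ h h1 h2 x0 d K Hh Hh1 Hc Hdom Hd).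
  - intros v Hv. apply is_derive_dom_kernel_primitive; lra.
  - intros v Hv. apply dom_kernel_continuous; lra.
  - apply is_lim_dom_kernel_primitive; lra.
Qed.

Definition sqrt_gap (v : R) : R := v - sqrt (v ^ 2 - 1).

Lemma sqrt_gap_bound v : 1 <= v -> 0 <= sqrt_gap v <= / v.
Proof.
  intros Hv. unfold sqrt_gap.
  assert (H0 : 0 <= v ^ 2 - 1) by nra.
  pose proof (sqrt_pos (v ^ 2 - 1)) as Hs.
  pose proof (sqrt_sqrt _ H0) as Hss.
  set (w := sqrt (v ^ 2 - 1)) in *.
  assert (Hw : w <= v) by (destruct (Rle_or_lt w v); auto; nra).
  assert (Hvw : v - w = / (v + w)) by (field_simplify_eq; nra).
  split; [lra|]. rewrite Hvw. apply Rinv_le_contravar; lra.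
Qed.

Lemma sqrt_gap_continuous v : continuous sqrt_gap v.
Proof.
  apply (@continuous_minus R_UniformSpace R_AbsRing R_NormedModule (fun v => v)
           (fun v => sqrt (v ^ 2 - 1))); [apply continuous_id|].
  apply (continuous_comp (fun v => v ^ 2 - 1) sqrt); [|apply continuous_sqrt].
  apply (@ex_derive_continuous R_AbsRing R_NormedModule). auto_derive. auto.
Qed.

Lemma sqrt_sqr_sub_scale r x : 0 < r -> sqrt ((r * x) ^ 2 - r ^ 2) = r * sqrt (x ^ 2 - 1).
Proof.
  intros Hr.
  replace ((r * x) ^ 2 - r ^ 2) with ((r * r) * (x ^ 2 - 1)) by ring.
  destruct (Rle_or_lt 0 (x ^ 2 - 1)) as [Hp|Hn].
  - rewrite sqrt_mult by nra. rewrite sqrt_square; lra.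
  - rewrite !sqrt_neg_0; nra.
Qed.

Lemma is_RInt_gen_affine_change (f phi : R -> R) (t r l : R) : 0 < r ->
  (forall v, phi v = r * f (t + r * v)) ->
  is_RInt_gen phi (at_point 1) (Rbar_locally p_infty) l ->
  is_RInt_gen f (at_point (t + r)) (Rbar_locally p_infty) l.
Proof.
  intros Hr Hphi H P HP.
  destruct (H P HP) as [Q Rr HQ [M HM] Hqr].
  apply Filter_prod with (Q := fun x => x = t + r) (R := fun c => t + r * M < c).
  - reflexivity.
  - exists (t + r * M). auto.
  - intros x c -> Hc.
    assert (HM' : M < (c - t) / r).
    { apply (Rmult_lt_reg_r r); auto. unfold Rdiv. rewrite Rmult_assoc, Rinv_l by lra. lra. }
    destruct (Hqr 1 ((c - t) / r) HQ (HM _ HM')) as [y [Hy Py]].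
    exists y. split; auto. simpl in *.
    assert (Hy' : is_RInt phi (/ r * (t + r) + - t / r) (/ r * c + - t / r) y).
    { replace (/ r * (t + r) + - t / r) with 1 by (field; lra).
      replace (/ r * c + - t / r) with ((c - t) / r) by (field; lra). exact Hy. }
    refine (is_RInt_ext _ _ _ _ _ _ (is_RInt_comp_lin _ (/ r) (- t / r) (t + r) c y Hy')).
    intros z _. rewrite Hphi. replace (t + r * (/ r * z + - t / r)) with z by (field; lra).
    change (/ r * (r * f z) = f z). field. lra.
Qed.

Lemma Derive_n_chain (f : R -> R) (Phi : nat -> R -> R) (a : R) (N : nat) :
  (forall x, a < x -> f x = Phi 0%nat x) ->
  (forall n x, (n < N)%nat -> a < x -> is_derive (Phi n) x (Phi (S n) x)) ->
  forall k x, (k <= N)%nat -> a < x -> Derive_n f k x = Phi k x.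
Proof.
  intros H0 HS k. induction k as [|k IH]; intros x Hk Hx; simpl; auto.
  rewrite (Derive_ext_loc _ (Phi k)).
  - apply is_derive_unique, HS; [lia|lra].
  - assert (He : 0 < x - a) by lra.
    exists (mkposreal _ He). intros y Hy. apply IH; [lia|].
    apply Rabs_def2 in Hy. unfold minus, plus, opp in Hy; simpl in Hy. lra.
Qed.

Lemma ratio_id_nonincreasing (f : R -> R) (T : R) : 0 < T ->
  (forall x, T <= x -> 0 < f x) ->
  (forall x, T <= x -> is_derive f x (Derive f x)) ->
  (forall x, T <= x -> Derive f x * x <= f x) ->
  forall a b, T <= a -> a <= b -> f b / b <= f a / a.
Proof.
  intros HT Hpos Hder Hle a b Ha Hab.
  destruct (Req_dec a b) as [->|Hne]; [lra|].
  destruct (MVT_cor2 (fun s => f s / s) (fun s => (Derive f s * s - f s) / s ^ 2) a b)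
    as [c [Hc Hcab]]; [lra| |].
  - intros c Hc. apply is_derive_Reals.
    replace ((Derive f c * c - f c) / c ^ 2) with ((Derive f c * c - f c * 1) / c ^ 2)
      by (rewrite Rmult_1_r; reflexivity).
    apply (is_derive_div f (fun s => s)); [apply Hder; lra|exact (is_derive_id c)|lra].
  - assert (Hneg : (Derive f c * c - f c) / c ^ 2 <= 0).
    { unfold Rdiv. apply Rmult_le_0_r; [pose proof (Hle c ltac:(lra)); lra|].
      left. apply Rinv_0_lt_compat. nra. }
    nra.
Qed.

Lemma bounded_upto (f : nat -> R) (N : nat) :
  exists M, 1 <= M /\ forall n, (n <= N)%nat -> f n <= M.
Proof.
  induction N as [|N [M [HM1 HM]]].
  - exists (Rmax 1 (f 0%nat)). split; [apply Rmax_l|].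
    intros n Hn. replace n with 0%nat by lia. apply Rmax_r.
  - exists (Rmax M (f (S N))). split; [pose proof (Rmax_l M (f (S N))); lra|].
    intros n Hn. destruct (Nat.eq_dec n (S N)) as [->|Hne]; [apply Rmax_r|].
    pose proof (HM n ltac:(lia)). pose proof (Rmax_l M (f (S N))). lra.
Qed.

Lemma ln_le_sub_1 x : 0 < x -> ln x <= x - 1.
Proof.
  intros Hx. rewrite <- (ln_exp (x - 1)). apply ln_le; auto.
  pose proof (exp_ineq1_le (x - 1)). lra.
Qed.

Lemma Rpower_one_minus_INR r j : 0 < r -> Rpower r (1 - INR j) = r ^ 2 / r ^ (S j).
Proof.
  intros Hr. unfold Rminus. rewrite Rpower_plus, Rpower_Ropp, Rpower_1, Rpower_pow by lra.
  simpl. field. split; [apply pow_nonzero|]; lra.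
Qed.

Lemma is_derive_mult_const_r (f : R -> R) (c x df : R) :
  is_derive f x df -> is_derive (fun y => f y * c) x (df * c).
Proof. intros H. exact (is_derive_scal_l f x df c H). Qed.

Lemma pow_split_le (q p : nat) (a b v s : R) : 0 < a -> 0 < b -> 0 < v -> a + b * v <= s ->
  a ^ q * (b * v) ^ p * (a + b * v) <= s ^ (q + p + 1).
Proof.
  intros Ha Hb Hv Hs.
  assert (0 < b * v) by nra.
  rewrite !pow_add, pow_1.
  apply Rmult_le_compat; try lra.
  - apply Rmult_le_pos; apply pow_le; lra.
  - apply Rmult_le_compat; try (apply pow_le; lra); apply pow_incr; lra.
Qed.

(** * The radial derivatives of w_1 *)

(* [∂_r^j] of [-2 u / r + 2 r b0] when [∂_r a_i = a_(i+1)], [∂_r u = - r a2] and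
   [∂_r b_p = b_(p+1)]; see [is_derive_radial_formula_radius]. *)
Definition radial_formula (j : nat) (a2 a3 a4 u b0 b1 b2 b3 r : R) : R :=
  match j with
  | 0 => -2 * u / r + 2 * r * b0
  | 1 => 2 * a2 + 2 * u / r ^ 2 + (2 * r * b1 + 2 * b0)
  | 2 => 2 * a3 - 2 * a2 / r - 4 * u / r ^ 3 + (2 * r * b2 + 4 * b1)
  | _ => 2 * a4 - 2 * a3 / r + 6 * a2 / r ^ 2 + 12 * u / r ^ 4 + (2 * r * b3 + 6 * b2)
  end.

(* [is_derive_unique] in the eta-expanded form produced by [auto_derive]. *)
Lemma Derive_of_is_derive (f : R -> R) x l : is_derive f x l -> Derive (fun y => f y) x = l.
Proof. apply is_derive_unique. Qed.

Lemma is_derive_radial_formula_linear j (a2 a3 a4 u b0 b1 b2 b3 : R -> R)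
    (da2 da3 da4 du db0 db1 db2 db3 r x : R) : 0 < r ->
  is_derive a2 x da2 -> is_derive a3 x da3 -> is_derive a4 x da4 -> is_derive u x du ->
  is_derive b0 x db0 -> is_derive b1 x db1 -> is_derive b2 x db2 -> is_derive b3 x db3 ->
  is_derive (fun y => radial_formula j (a2 y) (a3 y) (a4 y) (u y) (b0 y) (b1 y) (b2 y) (b3 y) r)
    x (radial_formula j da2 da3 da4 du db0 db1 db2 db3 r).
Proof.
  intros Hr Ha2 Ha3 Ha4 Hu Hb0 Hb1 Hb2 Hb3.
  destruct j as [|[|[|j]]]; unfold radial_formula; auto_derive;
    repeat split; try (eexists; eassumption);
    try (repeat apply Rmult_integral_contrapositive_currified; lra);
    rewrite ?(Derive_of_is_derive _ _ _ Ha2), ?(Derive_of_is_derive _ _ _ Ha3),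
      ?(Derive_of_is_derive _ _ _ Ha4), ?(Derive_of_is_derive _ _ _ Hu),
      ?(Derive_of_is_derive _ _ _ Hb0), ?(Derive_of_is_derive _ _ _ Hb1),
      ?(Derive_of_is_derive _ _ _ Hb2), ?(Derive_of_is_derive _ _ _ Hb3); field; lra.
Qed.

Lemma is_derive_radial_formula_radius j (a2 a3 a4 u b0 b1 b2 b3 : R -> R) r :
  (j < 3)%nat -> 0 < r ->
  is_derive a2 r (a3 r) -> is_derive a3 r (a4 r) -> is_derive u r (- r * a2 r) ->
  is_derive b0 r (b1 r) -> is_derive b1 r (b2 r) -> is_derive b2 r (b3 r) ->
  is_derive (fun y => radial_formula j (a2 y) (a3 y) (a4 y) (u y) (b0 y) (b1 y) (b2 y) (b3 y) y)
    r (radial_formula (S j) (a2 r) (a3 r) (a4 r) (u r) (b0 r) (b1 r) (b2 r) (b3 r) r).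
Proof.
  intros Hj Hr Ha2 Ha3 Hu Hb0 Hb1 Hb2.
  destruct j as [|[|[|j]]]; try lia; unfold radial_formula; auto_derive;
    repeat split; try (eexists; eassumption);
    try (repeat apply Rmult_integral_contrapositive_currified; lra);
    rewrite ?(Derive_of_is_derive _ _ _ Ha2), ?(Derive_of_is_derive _ _ _ Ha3),
      ?(Derive_of_is_derive _ _ _ Hu), ?(Derive_of_is_derive _ _ _ Hb0),
      ?(Derive_of_is_derive _ _ _ Hb1), ?(Derive_of_is_derive _ _ _ Hb2); field; lra.
Qed.

Lemma radial_formula_bound j (a2 a3 a4 u b0 b1 b2 b3 r Y : R) : (j <= 3)%nat -> 0 < r ->
  Rabs a2 <= Y -> Rabs (a3 * r) <= Y -> Rabs (a4 * r ^ 2) <= Y -> Rabs (u / r ^ 2) <= 3 * Y ->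
  Rabs b0 <= Y -> Rabs (b1 * r) <= Y -> Rabs (b2 * r ^ 2) <= Y -> Rabs (b3 * r ^ 3) <= Y ->
  Rabs (radial_formula j a2 a3 a4 u b0 b1 b2 b3 r) <= 54 * Y * r ^ 2 / r ^ S j.
Proof.
  intros Hj Hr Ha2 Ha3 Ha4 Hu Hb0 Hb1 Hb2 Hb3.
  set (E := radial_formula j a2 a3 a4 u b0 b1 b2 b3 r).
  set (q := r ^ S j / r ^ 2).
  assert (Hq : 0 < q) by (apply Rdiv_lt_0_compat; apply pow_lt; lra).
  (* After scaling by [q], [E] is a combination of the normalised quantities of the
     hypotheses with coefficients of total size at most 54. *)
  assert (Hscaled : Rabs (E * q) <= 54 * Y).
  { apply Rabs_le_between in Ha2, Ha3, Ha4, Hu, Hb0, Hb1, Hb2, Hb3. apply Rabs_le.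
    destruct j as [|[|[|[|j]]]]; try lia.
    - replace (E * q) with (-2 * (u / r ^ 2) + 2 * b0)
        by (unfold E, q, radial_formula; simpl; field; lra). lra.
    - replace (E * q) with (2 * a2 + 2 * (u / r ^ 2) + 2 * (b1 * r) + 2 * b0)
        by (unfold E, q, radial_formula; simpl; field; lra). lra.
    - replace (E * q) with (2 * (a3 * r) - 2 * a2 - 4 * (u / r ^ 2) + 2 * (b2 * r ^ 2)
        + 4 * (b1 * r)) by (unfold E, q, radial_formula; simpl; field; lra). lra.
    - replace (E * q) with (2 * (a4 * r ^ 2) - 2 * (a3 * r) + 6 * a2 + 12 * (u / r ^ 2)
        + 2 * (b3 * r ^ 3) + 6 * (b2 * r ^ 2))
        by (unfold E, q, radial_formula; simpl; field; lra). lra. }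
  rewrite Rabs_mult, (Rabs_right q) in Hscaled by lra.
  apply (Rmult_le_reg_r q); auto.
  replace (54 * Y * r ^ 2 / r ^ S j * q) with (54 * Y)
    by (unfold q; field; repeat split; try apply pow_nonzero; lra).
  exact Hscaled.
Qed.

(** * Weights with symbol-type derivative bounds *)

Section Weight.

Variables (lam : R -> R) (T : R) (B : nat -> R).
Hypothesis T_pos : 0 < T.
Hypothesis lam_pos : forall x, T <= x -> 0 < lam x.
Hypothesis lam_derive : forall n x, T <= x -> is_derive (Derive_n lam n) x (Derive_n lam (S n) x).
Hypothesis lam_derive_bound :
  forall n x, T <= x -> Rabs (Derive_n lam n x) <= B n * lam x / x ^ n.
Hypothesis lam_ratio_noninc : forall a b, T <= a -> a <= b -> lam b / b <= lam a / a.

Lemma B_nonneg n : 0 <= B n.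
Proof.
  pose proof (lam_derive_bound n T (Rle_refl T)) as H.
  pose proof (Rabs_pos (Derive_n lam n T)).
  assert (0 < lam T / T ^ n) by (apply Rdiv_lt_0_compat; [apply lam_pos; lra|apply pow_lt; lra]).
  unfold Rdiv in *. rewrite Rmult_assoc in H. nra.
Qed.

Lemma lam_le_linear a s : T <= a -> a <= s -> lam s <= lam a / a * s.
Proof.
  intros Ha Has. pose proof (lam_ratio_noninc a s Ha Has) as H.
  apply (Rmult_le_compat_r s) in H; [|lra].
  replace (lam s / s * s) with (lam s) in H by (field; lra). exact H.
Qed.

Lemma Derive_n_lam_decay n a s : T <= a -> a <= s ->
  Rabs (Derive_n lam (S n) s) <= B (S n) * (lam a / a) / s ^ n.
Proof.
  intros Ha Has.
  eapply Rle_trans; [apply lam_derive_bound; lra|].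
  pose proof (lam_le_linear a s Ha Has). pose proof (B_nonneg (S n)).
  assert (0 < s ^ n) by (apply pow_lt; lra).
  replace (B (S n) * (lam a / a) / s ^ n) with (B (S n) * (lam a / a * s) / s ^ (S n))
    by (simpl; field; lra).
  unfold Rdiv. apply Rmult_le_compat_r; [left; apply Rinv_0_lt_compat, pow_lt; lra|].
  apply Rmult_le_compat_l; lra.
Qed.

Lemma tail_integrand_dominated m p q a b a0 b0 s0 v : m = (q + p + 2)%nat ->
  T <= s0 -> s0 <= a + b -> 0 < a0 <= a -> 0 < b0 <= b -> 1 <= v ->
  Rabs (Derive_n lam m (a + b * v) * v ^ p * sqrt_gap v)
  <= B m * (lam s0 / s0) / (a0 ^ q * b0 ^ p) * dom_kernel a0 b0 v.
Proof.
  intros -> Hs0 Hs0ab Ha0 Hb0 Hv.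
  set (s := a + b * v). set (N := (q + p + 1)%nat).
  assert (Hs : a0 + b0 * v <= s) by (unfold s; nra).
  assert (Hs0s : s0 <= s) by (unfold s; nra).
  assert (Hspos : 0 < s) by nra.
  destruct (sqrt_gap_bound v Hv) as [Hg0 Hg1].
  assert (Hvp : 0 < v ^ p) by (apply pow_lt; lra).
  assert (HsN : 0 < s ^ N) by (apply pow_lt; lra).
  assert (Hc0 : 0 < lam s0 / s0) by (apply Rdiv_lt_0_compat; [apply lam_pos|]; lra).
  assert (HBc : 0 <= B (q + p + 2) * (lam s0 / s0)) by (pose proof (B_nonneg (q + p + 2)); nra).
  assert (HD : Rabs (Derive_n lam (q + p + 2) s) <= B (q + p + 2) * (lam s0 / s0) / s ^ N)
    by (replace (q + p + 2)%nat with (S N) by (unfold N; lia); apply Derive_n_lam_decay; lra).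
  assert (Hsplit := pow_split_le q p a0 b0 v s ltac:(lra) ltac:(lra) ltac:(lra) Hs).
  fold N in Hsplit.
  assert (Hsplit0 : 0 < a0 ^ q * (b0 * v) ^ p * (a0 + b0 * v))
    by (apply Rmult_lt_0_compat; [apply Rmult_lt_0_compat; apply pow_lt|]; nra).
  rewrite !Rabs_mult, (Rabs_right (v ^ p)), (Rabs_right (sqrt_gap v)) by lra.
  apply Rle_trans with (B (q + p + 2) * (lam s0 / s0) / s ^ N * v ^ p * / v).
  { apply Rmult_le_compat; try (apply Rmult_le_pos; [apply Rabs_pos|lra]); try lra.
    apply Rmult_le_compat_r; lra. }
  apply Rle_trans with
    (B (q + p + 2) * (lam s0 / s0) * v ^ p / (v * (a0 ^ q * (b0 * v) ^ p * (a0 + b0 * v)))).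
  { replace (B (q + p + 2) * (lam s0 / s0) / s ^ N * v ^ p * / v)
      with (B (q + p + 2) * (lam s0 / s0) * v ^ p / (v * s ^ N)) by (field; lra).
    unfold Rdiv. apply Rmult_le_compat_l; [nra|].
    apply Rinv_le_contravar; [nra|]. apply Rmult_le_compat_l; lra. }
  right. unfold dom_kernel. rewrite Rpow_mult_distr.
  field. repeat split; try apply pow_nonzero; nra.
Qed.

(* The substitution s = t + r v turns the integral in [w1] into [r ^ 2 * tail_moment 2 0 t r]. *)
Definition tail_moment (m p : nat) (t r : R) : R :=
  int_1_oo (fun v => Derive_n lam m (t + r * v) * v ^ p * sqrt_gap v).

Lemma tail_integrand_continuous m p t r v : T <= t + r * v ->
  continuous (fun v => Derive_n lam m (t + r * v) * v ^ p * sqrt_gap v) v.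
Proof.
  intros Hv.
  apply (@continuous_mult R_UniformSpace R_AbsRing);
    [apply (@continuous_mult R_UniformSpace R_AbsRing)|].
  - apply (continuous_comp (fun v => t + r * v) (Derive_n lam m)).
    + apply (@ex_derive_continuous R_AbsRing R_NormedModule). auto_derive. auto.
    + apply (@ex_derive_continuous R_AbsRing R_NormedModule). eexists. apply lam_derive; lra.
  - apply (@ex_derive_continuous R_AbsRing R_NormedModule). auto_derive. auto.
  - apply sqrt_gap_continuous.
Qed.

Lemma tail_moment_bound m p q t r s0 : m = (q + p + 2)%nat ->
  T <= s0 -> s0 <= t + r -> 0 < t -> 0 < r ->
  Rabs (tail_moment m p t r)
  <= B m * (lam s0 / s0) / (t ^ q * r ^ p) * (/ t * (ln (t + r) - ln r)).
Proof.
  intros Hm Hs0 Hs0tr Ht Hr.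
  apply int_1_oo_dom_kernel; auto.
  - intros v Hv. apply tail_integrand_continuous. nra.
  - intros v Hv. apply (tail_integrand_dominated m p q); auto; lra.
Qed.

Lemma is_derive_lam_comp m (f : R -> R) x df : T <= f x -> is_derive f x df ->
  is_derive (fun y => Derive_n lam m (f y)) x (df * Derive_n lam (S m) (f x)).
Proof.
  intros Hx Hf. apply (is_derive_comp (Derive_n lam m) f x); auto.
Qed.

Lemma is_derive_tail_integrand_t m p r v x : T <= x + r * v ->
  is_derive (fun y => Derive_n lam m (y + r * v) * v ^ p * sqrt_gap v) x
    (Derive_n lam (S m) (x + r * v) * v ^ p * sqrt_gap v).
Proof.
  intros Hx. apply is_derive_mult_const_r, is_derive_mult_const_r.
  rewrite <- (Rmult_1_l (Derive_n lam (S m) (x + r * v))).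
  apply (is_derive_lam_comp m (fun y => y + r * v)); [exact Hx|]. auto_derive; auto; ring.
Qed.

Lemma is_derive_tail_integrand_r m p t v x : T <= t + x * v ->
  is_derive (fun y => Derive_n lam m (t + y * v) * v ^ p * sqrt_gap v) x
    (Derive_n lam (S m) (t + x * v) * v ^ S p * sqrt_gap v).
Proof.
  intros Hx.
  replace (Derive_n lam (S m) (t + x * v) * v ^ S p * sqrt_gap v)
    with (v * Derive_n lam (S m) (t + x * v) * v ^ p * sqrt_gap v) by (simpl; ring).
  apply is_derive_mult_const_r, is_derive_mult_const_r.
  apply (is_derive_lam_comp m (fun y => t + y * v)); [exact Hx|]. auto_derive; auto; ring.
Qed.

Lemma is_derive_tail_moment_t m p t r : (p + 2 <= m)%nat -> T < t -> 0 < r ->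
  is_derive (fun x => tail_moment m p x r) t (tail_moment (S m) p t r).
Proof.
  intros Hm Ht Hr.
  set (q := (m - p - 2)%nat). set (a := (t + T) / 2). set (c0 := lam a / a).
  assert (Ha : T < a < t) by (unfold a; lra).
  assert (Hc0 : 0 < c0) by (apply Rdiv_lt_0_compat; [apply lam_pos|]; lra).
  set (K := fun i => B (m + i) * c0 / (a ^ (q + i) * r ^ p)).
  assert (HK : forall i, 0 <= K i).
  { intros i. unfold K. apply Rmult_le_pos; [pose proof (B_nonneg (m + i)); nra|].
    left. apply Rinv_0_lt_compat, Rmult_lt_0_compat; apply pow_lt; lra. }
  pose proof (HK 0%nat). pose proof (HK 1%nat). pose proof (HK 2%nat).
  unfold tail_moment.
  apply (is_derive_int_1_oo_dom_kernel a r (t - a) (K 0%nat + K 1%nat + K 2%nat) t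
    (fun x v => Derive_n lam m (x + r * v) * v ^ p * sqrt_gap v)
    (fun x v => Derive_n lam (S m) (x + r * v) * v ^ p * sqrt_gap v)
    (fun x v => Derive_n lam (S (S m)) (x + r * v) * v ^ p * sqrt_gap v)); try lra;
    intros x v Hx Hv; apply Rabs_def2 in Hx.
  - apply is_derive_tail_integrand_t. nra.
  - apply is_derive_tail_integrand_t. nra.
  - split; apply tail_integrand_continuous; nra.
  - assert (Hdom : forall i, (i <= 2)%nat ->
      Rabs (Derive_n lam (m + i) (x + r * v) * v ^ p * sqrt_gap v)
      <= (K 0%nat + K 1%nat + K 2%nat) * dom_kernel a r v).
    { intros i Hi. apply Rle_trans with (K i * dom_kernel a r v).
      - unfold K, c0. apply (tail_integrand_dominated (m + i) p (q + i) x r a r a v);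
          [unfold q; lia|lra..].
      - apply Rmult_le_compat_r; [left; apply dom_kernel_pos; lra|].
        destruct i as [|[|[|]]]; [lra|lra|lra|lia]. }
    pose proof (Hdom 0%nat ltac:(lia)). pose proof (Hdom 1%nat ltac:(lia)).
    pose proof (Hdom 2%nat ltac:(lia)).
    rewrite Nat.add_0_r in *. replace (m + 1)%nat with (S m) in * by lia.
    replace (m + 2)%nat with (S (S m)) in * by lia. auto.
Qed.

Lemma is_derive_tail_moment_r m p t r : (p + 2 <= m)%nat -> T <= t -> 0 < r ->
  is_derive (fun y => tail_moment m p t y) r (tail_moment (S m) (S p) t r).
Proof.
  intros Hm Ht Hr.
  set (q := (m - p - 2)%nat). set (d := r / 2). set (c0 := lam t / t).
  assert (Hd : 0 < d) by (unfold d; lra).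
  assert (Hc0 : 0 < c0) by (apply Rdiv_lt_0_compat; [apply lam_pos|]; lra).
  set (K := fun i => B (m + i) * c0 / (t ^ q * d ^ (p + i))).
  assert (HK : forall i, 0 <= K i).
  { intros i. unfold K. apply Rmult_le_pos; [pose proof (B_nonneg (m + i)); nra|].
    left. apply Rinv_0_lt_compat, Rmult_lt_0_compat; apply pow_lt; lra. }
  pose proof (HK 0%nat). pose proof (HK 1%nat). pose proof (HK 2%nat).
  unfold tail_moment.
  apply (is_derive_int_1_oo_dom_kernel t d d (K 0%nat + K 1%nat + K 2%nat) r
    (fun x v => Derive_n lam m (t + x * v) * v ^ p * sqrt_gap v)
    (fun x v => Derive_n lam (S m) (t + x * v) * v ^ S p * sqrt_gap v)
    (fun x v => Derive_n lam (S (S m)) (t + x * v) * v ^ S (S p) * sqrt_gap v)); try lra;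
    intros x v Hx Hv; apply Rabs_def2 in Hx; unfold d in Hx.
  - apply is_derive_tail_integrand_r. nra.
  - apply is_derive_tail_integrand_r. nra.
  - split; apply tail_integrand_continuous; nra.
  - assert (Hdom : forall i, (i <= 2)%nat ->
      Rabs (Derive_n lam (m + i) (t + x * v) * v ^ (p + i) * sqrt_gap v)
      <= (K 0%nat + K 1%nat + K 2%nat) * dom_kernel t d v).
    { intros i Hi. apply Rle_trans with (K i * dom_kernel t d v).
      - unfold K, c0. apply (tail_integrand_dominated (m + i) (p + i) q t x t d t v);
          [unfold q; lia|unfold d; lra..].
      - apply Rmult_le_compat_r; [left; apply dom_kernel_pos; lra|].
        destruct i as [|[|[|]]]; [lra|lra|lra|lia]. }
    pose proof (Hdom 0%nat ltac:(lia)). pose proof (Hdom 1%nat ltac:(lia)).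
    pose proof (Hdom 2%nat ltac:(lia)).
    rewrite !Nat.add_0_r in *. replace (m + 1)%nat with (S m) in * by lia.
    replace (p + 1)%nat with (S p) in * by lia.
    replace (m + 2)%nat with (S (S m)) in * by lia.
    replace (p + 2)%nat with (S (S p)) in * by lia. auto.
Qed.

Lemma is_derive_lam_shift_t n x r : T <= x + r ->
  is_derive (fun y => Derive_n lam n (y + r)) x (Derive_n lam (S n) (x + r)).
Proof.
  intros Hx. rewrite <- (Rmult_1_l (Derive_n lam (S n) (x + r))).
  apply (is_derive_lam_comp n (fun y => y + r)); [exact Hx|]. auto_derive; auto; ring.
Qed.

Lemma is_derive_lam_shift_r n t y : T <= t + y ->
  is_derive (fun z => Derive_n lam n (t + z)) y (Derive_n lam (S n) (t + y)).
Proof.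
  intros Hy. rewrite <- (Rmult_1_l (Derive_n lam (S n) (t + y))).
  apply (is_derive_lam_comp n (fun z => t + z)); [exact Hy|]. auto_derive; auto; ring.
Qed.

Definition taylor_defect (k : nat) (t r : R) : R :=
  Derive_n lam k (t + r) - Derive_n lam k t - r * Derive_n lam (S k) (t + r).

Lemma is_derive_taylor_defect_t k t r : T <= t -> 0 < r ->
  is_derive (fun x => taylor_defect k x r) t (taylor_defect (S k) t r).
Proof.
  intros Ht Hr. unfold taylor_defect.
  apply (is_derive_minus (fun x => Derive_n lam k (x + r) - Derive_n lam k x)
           (fun x => r * Derive_n lam (S k) (x + r))).
  - apply (is_derive_minus (fun x => Derive_n lam k (x + r)) (Derive_n lam k)).
    + apply is_derive_lam_shift_t. lra.
    + apply lam_derive. lra.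
  - apply is_derive_scal, is_derive_lam_shift_t. lra.
Qed.

Lemma is_derive_taylor_defect_r k t y : T <= t + y ->
  is_derive (fun z => taylor_defect k t z) y (- y * Derive_n lam (S (S k)) (t + y)).
Proof.
  intros Hy. unfold taylor_defect.
  replace (- y * Derive_n lam (S (S k)) (t + y))
    with (Derive_n lam (S k) (t + y) - 0
          - (1 * Derive_n lam (S k) (t + y) + y * Derive_n lam (S (S k)) (t + y))) by ring.
  apply (is_derive_minus (fun z => Derive_n lam k (t + z) - Derive_n lam k t)
           (fun z => z * Derive_n lam (S k) (t + z))).
  - apply (is_derive_minus (fun z => Derive_n lam k (t + z)) (fun _ => Derive_n lam k t)).
    + apply is_derive_lam_shift_r. exact Hy.
    + exact (is_derive_const _ y).
  - apply (is_derive_mult (fun z => z) (fun z => Derive_n lam (S k) (t + z)));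
      [exact (is_derive_id y)|apply is_derive_lam_shift_r; exact Hy|intros; apply Rmult_comm].
Qed.

Definition w1_deriv (k j : nat) (t r : R) : R :=
  radial_formula j (Derive_n lam (2 + k) (t + r)) (Derive_n lam (3 + k) (t + r))
    (Derive_n lam (4 + k) (t + r)) (taylor_defect k t r)
    (tail_moment (2 + k) 0 t r) (tail_moment (3 + k) 1 t r)
    (tail_moment (4 + k) 2 t r) (tail_moment (5 + k) 3 t r) r.

Lemma is_derive_w1_deriv_t k j t r : T < t -> 0 < r ->
  is_derive (fun x => w1_deriv k j x r) t (w1_deriv (S k) j t r).
Proof.
  intros Ht Hr. unfold w1_deriv.
  apply is_derive_radial_formula_linear; auto;
    try (apply is_derive_lam_shift_t; lra);
    try (apply is_derive_taylor_defect_t; lra);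
    apply is_derive_tail_moment_t; auto; lia.
Qed.

Lemma is_derive_w1_deriv_r k j t r : (j < 3)%nat -> T <= t -> 0 < r ->
  is_derive (fun y => w1_deriv k j t y) r (w1_deriv k (S j) t r).
Proof.
  intros Hj Ht Hr. unfold w1_deriv.
  apply (is_derive_radial_formula_radius j (fun y => Derive_n lam (2 + k) (t + y))
    (fun y => Derive_n lam (3 + k) (t + y)) (fun y => Derive_n lam (4 + k) (t + y))
    (fun y => taylor_defect k t y)
    (fun y => tail_moment (2 + k) 0 t y) (fun y => tail_moment (3 + k) 1 t y)
    (fun y => tail_moment (4 + k) 2 t y) (fun y => tail_moment (5 + k) 3 t y)); auto;
    try (apply is_derive_lam_shift_r; lra);
    try (apply is_derive_taylor_defect_r; lra);
    apply is_derive_tail_moment_r; auto; lia.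
Qed.

Lemma is_RInt_gen_tail_moment m p t r : (p + 2 <= m)%nat -> T <= t -> 0 < r ->
  is_RInt_gen (fun v => Derive_n lam m (t + r * v) * v ^ p * sqrt_gap v)
    (at_point 1) (Rbar_locally p_infty) (tail_moment m p t r).
Proof.
  intros Hm Ht Hr.
  apply (int_1_oo_dom_kernel t r (B m * (lam t / t) / (t ^ (m - p - 2) * r ^ p))); try lra.
  - intros v Hv. apply tail_integrand_continuous. nra.
  - intros v Hv. apply (tail_integrand_dominated m p (m - p - 2)); [lia|lra..].
Qed.

Lemma w1_eq_w1_deriv t r : T <= t -> 0 < r -> w1 lam t r = w1_deriv 0 0 t r.
Proof.
  intros Ht Hr.
  assert (Hint := is_RInt_gen_tail_moment 2 0 t r ltac:(lia) Ht Hr).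
  apply (is_RInt_gen_scal (V := R_NormedModule) _ (r ^ 2)) in Hint.
  apply (is_RInt_gen_affine_change
    (fun s => Derive_n lam 2 s * ((s - t) - sqrt ((s - t) ^ 2 - r ^ 2))) _ t r) in Hint; auto.
  2:{ intros v. replace (t + r * v - t) with (r * v) by ring. rewrite sqrt_sqr_sub_scale by auto.
      unfold sqrt_gap, scal. simpl. unfold mult. simpl. ring. }
  unfold w1. rewrite (is_RInt_gen_unique _ _ Hint).
  unfold w1_deriv, radial_formula, taylor_defect, scal. simpl. unfold mult. simpl.
  change (Derive (fun x => lam x) (t + r)) with (Derive lam (t + r)). field. lra.
Qed.

Lemma Derive_n_w1_radius t r j : T <= t -> 0 < r -> (j <= 3)%nat ->
  Derive_n (fun y => w1 lam t y) j r = w1_deriv 0 j t r.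
Proof.
  intros Ht Hr Hj.
  apply (Derive_n_chain _ (fun n y => w1_deriv 0 n t y) 0 3); auto.
  - intros y Hy. apply w1_eq_w1_deriv; auto.
  - intros n y Hn Hy. apply is_derive_w1_deriv_r; auto.
Qed.

Lemma dw1_eq_w1_deriv k j t r : T < t -> 0 < r -> (j <= 3)%nat ->
  dw1 lam k j t r = w1_deriv k j t r.
Proof.
  intros Ht Hr Hj. unfold dw1.
  apply (Derive_n_chain _ (fun n x => w1_deriv n j x r) T k); auto.
  - intros x Hx. apply Derive_n_w1_radius; auto; lra.
  - intros n x Hn Hx. apply is_derive_w1_deriv_t; auto.
Qed.

Lemma lam_le_sup_on a b y : T <= a -> a <= y <= b -> lam y <= sup_on lam a b.
Proof.
  intros Ha Hy. unfold sup_on.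
  set (E := fun z => exists x, a <= x <= b /\ z = lam x).
  destruct (Lub_Rbar_correct E) as [Hub Hlub].
  assert (HE : E (lam y)) by (exists y; split; auto).
  assert (Hbound : is_ub_Rbar E (lam a / a * b)).
  { intros z [x [Hx ->]]. simpl. pose proof (lam_le_linear a x Ha ltac:(lra)).
    pose proof (lam_pos a Ha). pose proof (Rdiv_lt_0_compat (lam a) a ltac:(lra) ltac:(lra)).
    nra. }
  pose proof (Hlub _ Hbound) as H1. pose proof (Hub _ HE) as H2.
  destruct (Lub_Rbar E) as [l| |]; simpl in *; try contradiction. lra.
Qed.

Section Estimates.

Variable Bm : R.
(* 13 = 8 + 5 is the highest order of a derivative of [lam] in [w1_deriv k _] for k <= 8. *)
Hypothesis B_le_Bm : forall n, (n <= 13)%nat -> B n <= Bm.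

Lemma Bm_nonneg : 0 <= Bm.
Proof. pose proof (B_nonneg 0). pose proof (B_le_Bm 0 ltac:(lia)). lra. Qed.

Lemma Derive_n_lam_le_Bm n x : (n <= 13)%nat -> T <= x ->
  Rabs (Derive_n lam n x) <= Bm * lam x / x ^ n.
Proof.
  intros Hn Hx. eapply Rle_trans; [apply lam_derive_bound; auto|].
  unfold Rdiv. rewrite !Rmult_assoc. apply Rmult_le_compat_r; [|auto].
  apply Rmult_le_pos; [left; apply lam_pos; auto|left; apply Rinv_0_lt_compat, pow_lt; lra].
Qed.

Section Near.

Variables (k : nat) (t r : R).
Hypotheses (t_ge_T : T <= t) (ln_t_ge_1 : 1 <= ln t) (r_pos : 0 < r) (r_le_t : r <= t).

Let X := Bm * lam t / t ^ (2 + k).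

Lemma near_scale_nonneg : 0 <= X.
Proof.
  unfold X. pose proof Bm_nonneg. pose proof (lam_pos t t_ge_T).
  apply Rdiv_le_0_compat; [nra|apply pow_lt; lra].
Qed.

Lemma Derive_n_lam_near n y : (n <= 13)%nat -> t <= y <= 2 * t ->
  Rabs (Derive_n lam n y) <= 2 * Bm * lam t / t ^ n.
Proof.
  intros Hn Hy.
  eapply Rle_trans; [apply Derive_n_lam_le_Bm; auto; lra|].
  pose proof Bm_nonneg. pose proof (lam_pos y ltac:(lra)).
  assert (Hly : lam y <= 2 * lam t).
  { pose proof (lam_le_linear t y t_ge_T ltac:(lra)). pose proof (lam_pos t t_ge_T).
    apply Rle_trans with (lam t / t * (2 * t)); [|right; field]; nra. }
  assert (0 < t ^ n) by (apply pow_lt; lra).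
  assert (t ^ n <= y ^ n) by (apply pow_incr; lra).
  unfold Rdiv. apply Rmult_le_compat; [nra|left; apply Rinv_0_lt_compat, pow_lt; lra|nra|].
  apply Rinv_le_contravar; lra.
Qed.

Lemma Derive_n_lam_near_scaled i : (i + (2 + k) <= 13)%nat ->
  Rabs (Derive_n lam (i + (2 + k)) (t + r) * r ^ i) <= 2 * X.
Proof.
  intros Hi.
  pose proof (Derive_n_lam_near (i + (2 + k)) (t + r) Hi ltac:(lra)) as H.
  pose proof near_scale_nonneg. pose proof (pow_lt t i ltac:(lra)).
  rewrite Rabs_mult, (Rabs_right (r ^ i)) by (left; apply pow_lt; lra).
  rewrite pow_add in H.
  replace (2 * Bm * lam t / (t ^ i * t ^ (2 + k))) with (2 * X / t ^ i) in H
    by (unfold X; field; split; apply pow_nonzero; lra).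
  apply Rle_trans with (2 * X / t ^ i * t ^ i); [|right; field; apply pow_nonzero; lra].
  apply Rmult_le_compat; try (apply Rabs_pos || (left; apply pow_lt; lra)); auto.
  apply pow_incr; lra.
Qed.

Lemma taylor_defect_near : (k <= 11)%nat -> Rabs (taylor_defect k t r / r ^ 2) <= 2 * X.
Proof.
  intros Hk.
  destruct (MVT_cor2 (taylor_defect k t) (fun y => - y * Derive_n lam (S (S k)) (t + y)) 0 r)
    as [c [Hc Hcr]]; [lra|intros y Hy; apply is_derive_Reals, is_derive_taylor_defect_r; lra|].
  replace (taylor_defect k t 0) with 0 in Hc by (unfold taylor_defect; rewrite Rplus_0_r; ring).
  rewrite Rminus_0_r, Rminus_0_r in Hc. rewrite Hc.
  pose proof (Derive_n_lam_near (S (S k)) (t + c) ltac:(lia) ltac:(lra)) as HD.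
  replace (2 * Bm * lam t / t ^ S (S k)) with (2 * X) in HD by (unfold X, Rdiv; simpl; ring).
  replace (- c * Derive_n lam (S (S k)) (t + c) * r / r ^ 2)
    with (- (c / r) * Derive_n lam (S (S k)) (t + c)) by (field; lra).
  assert (Hcr1 : 0 <= c / r <= 1)
    by (split; [apply Rdiv_le_0_compat|apply (Rdiv_le_1 c r)]; lra).
  rewrite Rabs_mult, Rabs_Ropp, Rabs_right by lra.
  pose proof (Rabs_pos (Derive_n lam (S (S k)) (t + c))). nra.
Qed.

Lemma ln_ratio_near : ln (t + r) - ln r <= 2 * (ln t + Rabs (ln r)).
Proof.
  assert (H2t : ln (t + r) <= ln 2 + ln t) by (rewrite <- ln_mult by lra; apply ln_le; lra).
  pose proof (ln_le_sub_1 2 ltac:(lra)).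
  pose proof (Rle_abs (- ln r)). pose proof (Rabs_pos (ln r)). rewrite Rabs_Ropp in *. lra.
Qed.

Lemma tail_moment_near p : (p + (2 + k) <= 13)%nat ->
  Rabs (tail_moment (p + (2 + k)) p t r * r ^ p) <= 2 * X * (ln t + Rabs (ln r)).
Proof.
  intros Hp.
  pose proof (tail_moment_bound (p + (2 + k)) p k t r t ltac:(lia) t_ge_T ltac:(lra)
    ltac:(lra) r_pos) as H.
  pose proof (B_nonneg (p + (2 + k))). pose proof (B_le_Bm (p + (2 + k)) Hp).
  pose proof (lam_pos t t_ge_T). pose proof (pow_lt t k ltac:(lra)). pose proof (pow_lt r p r_pos).
  set (L := ln t + Rabs (ln r)) in *.
  set (c := B (p + (2 + k)) * (lam t / t) / (t ^ k * r ^ p) * / t).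
  assert (Hc : 0 <= c) by (unfold c; apply Rmult_le_pos;
    [apply Rdiv_le_0_compat; [apply Rmult_le_pos; [|apply Rdiv_le_0_compat]|]; nra|
     left; apply Rinv_0_lt_compat; lra]).
  rewrite <- Rmult_assoc in H. fold c in H.
  rewrite Rabs_mult, (Rabs_right (r ^ p)) by lra.
  apply Rle_trans with (c * (2 * L) * r ^ p).
  { apply Rmult_le_compat_r; [lra|]. eapply Rle_trans; [exact H|].
    apply Rmult_le_compat_l; [exact Hc|apply ln_ratio_near]. }
  replace (c * (2 * L) * r ^ p) with (2 * (B (p + (2 + k)) * lam t / t ^ (2 + k)) * L)
    by (unfold c; simpl; field; repeat split; try apply pow_nonzero; lra).
  assert (0 <= L) by (unfold L; pose proof (Rabs_pos (ln r)); lra).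
  unfold X. apply Rmult_le_compat_r; [lra|]. apply Rmult_le_compat_l; [lra|].
  unfold Rdiv. apply Rmult_le_compat_r; [left; apply Rinv_0_lt_compat, pow_lt; lra|].
  apply Rmult_le_compat_r; lra.
Qed.

Lemma w1_deriv_near j : (k <= 8)%nat -> (j <= 3)%nat ->
  Rabs (w1_deriv k j t r)
  <= 108 * Bm * Rpower r (1 - INR j) * lam t * (ln t + Rabs (ln r)) / t ^ (2 + k).
Proof.
  intros Hk Hj.
  set (L := ln t + Rabs (ln r)).
  assert (HL : 1 <= L) by (unfold L; pose proof (Rabs_pos (ln r)); lra).
  pose proof near_scale_nonneg as HX.
  assert (HXL : 2 * X <= 2 * X * L) by nra.
  pose proof (Derive_n_lam_near_scaled 0 ltac:(lia)) as Ha2.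
  pose proof (Derive_n_lam_near_scaled 1 ltac:(lia)) as Ha3.
  pose proof (Derive_n_lam_near_scaled 2 ltac:(lia)) as Ha4.
  pose proof (tail_moment_near 0 ltac:(lia)) as Hb0.
  pose proof (tail_moment_near 1 ltac:(lia)) as Hb1.
  rewrite pow_O, Rmult_1_r in Ha2, Hb0. rewrite pow_1 in Ha3, Hb1.
  unfold w1_deriv.
  eapply Rle_trans; [apply (radial_formula_bound j _ _ _ _ _ _ _ _ r (2 * X * L) Hj r_pos)|].
  - eapply Rle_trans; [exact Ha2|exact HXL].
  - eapply Rle_trans; [exact Ha3|exact HXL].
  - eapply Rle_trans; [exact Ha4|exact HXL].
  - pose proof (taylor_defect_near ltac:(lia)). nra.
  - exact Hb0.
  - exact Hb1.
  - exact (tail_moment_near 2 ltac:(lia)).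
  - exact (tail_moment_near 3 ltac:(lia)).
  - right. rewrite Rpower_one_minus_INR by lra. unfold X, L.
    field. repeat split; try apply pow_nonzero; lra.
Qed.

End Near.

Section Far.

Variables (k : nat) (t r : R).
Hypotheses (t_ge_T : T <= t) (t_le_r : t <= r).

Let Lsup := sup_on lam t (t + r).
Let Y := Bm * Lsup / (t ^ k * r ^ 2).

Lemma sup_on_lam_pos : 0 < Lsup.
Proof.
  pose proof (lam_pos t t_ge_T). pose proof (lam_le_sup_on t (t + r) t t_ge_T ltac:(lra)).
  unfold Lsup. lra.
Qed.

Lemma Derive_n_lam_far i : (i + k <= 13)%nat ->
  Rabs (Derive_n lam (i + k) (t + r)) <= Bm * Lsup / (t ^ k * r ^ i).
Proof.
  intros Hi.
  eapply Rle_trans; [apply Derive_n_lam_le_Bm; auto; lra|].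
  pose proof Bm_nonneg. pose proof sup_on_lam_pos.
  pose proof (lam_pos (t + r) ltac:(lra)).
  pose proof (lam_le_sup_on t (t + r) (t + r) t_ge_T ltac:(lra)) as Hsup. fold Lsup in Hsup.
  pose proof (pow_lt t k ltac:(lra)). pose proof (pow_lt r i ltac:(lra)).
  pose proof (pow_lt (t + r) (i + k) ltac:(lra)).
  assert (Hpow : t ^ k * r ^ i <= (t + r) ^ (i + k)).
  { rewrite pow_add, Rmult_comm.
    apply Rmult_le_compat; try lra; apply pow_incr; lra. }
  unfold Rdiv. apply Rmult_le_compat; [nra|left; apply Rinv_0_lt_compat; nra|nra|].
  apply Rinv_le_contravar; nra.
Qed.

Lemma Derive_n_lam_far_scaled i : (i + (2 + k) <= 13)%nat ->
  Rabs (Derive_n lam (i + (2 + k)) (t + r) * r ^ i) <= Y.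
Proof.
  intros Hi.
  replace (i + (2 + k))%nat with (i + 2 + k)%nat by lia.
  pose proof (Derive_n_lam_far (i + 2) ltac:(lia)) as H.
  pose proof (pow_lt r i ltac:(lra)).
  rewrite Rabs_mult, (Rabs_right (r ^ i)) by lra.
  apply Rle_trans with (Bm * Lsup / (t ^ k * r ^ (i + 2)) * r ^ i);
    [apply Rmult_le_compat_r; lra|].
  right. unfold Y. rewrite pow_add. field. repeat split; try apply pow_nonzero; lra.
Qed.

Lemma taylor_defect_far : (k <= 12)%nat -> Rabs (taylor_defect k t r / r ^ 2) <= 3 * Y.
Proof.
  intros Hk.
  pose proof (Derive_n_lam_far 0 ltac:(lia)) as H0.
  pose proof (Derive_n_lam_far 1 ltac:(lia)) as H1.
  pose proof (Derive_n_lam_le_Bm k t ltac:(lia) t_ge_T) as Ht.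
  pose proof (lam_le_sup_on t (t + r) t t_ge_T ltac:(lra)) as Hsup. fold Lsup in Hsup.
  pose proof Bm_nonneg. pose proof (pow_lt t k ltac:(lra)).
  assert (Ht' : Rabs (Derive_n lam k t) <= Bm * Lsup / (t ^ k * r ^ 0)).
  { eapply Rle_trans; [exact Ht|]. rewrite pow_O, Rmult_1_r. unfold Rdiv.
    apply Rmult_le_compat_r; [left; apply Rinv_0_lt_compat; lra|]. apply Rmult_le_compat_l; auto. }
  simpl in H0, H1, Ht'. unfold taylor_defect, Y.
  set (Z := Bm * Lsup / (t ^ k * r ^ 2)).
  replace (Bm * Lsup / (t ^ k * 1)) with (Z * r ^ 2) in H0, Ht'
    by (unfold Z; field; split; try apply pow_nonzero; lra).
  replace (Bm * Lsup / (t ^ k * (r * 1))) with (Z * r) in H1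
    by (unfold Z; field; split; try apply pow_nonzero; lra).
  unfold Rdiv. rewrite Rabs_mult, Rabs_inv, (Rabs_right (r ^ 2)) by (left; apply pow_lt; lra).
  apply (Rmult_le_reg_r (r ^ 2)); [apply pow_lt; lra|].
  rewrite Rmult_assoc, Rinv_l, Rmult_1_r by (apply pow_nonzero; lra).
  eapply Rle_trans; [apply Rabs_triang|]. rewrite Rabs_Ropp, Rabs_mult, (Rabs_right r) by lra.
  eapply Rle_trans; [apply Rplus_le_compat_r, Rabs_triang|]. rewrite Rabs_Ropp.
  simpl. nra.
Qed.

Lemma tail_moment_far p : (p + (2 + k) <= 13)%nat ->
  Rabs (tail_moment (p + (2 + k)) p t r * r ^ p) <= Y.
Proof.
  intros Hp.
  pose proof (tail_moment_bound (p + (2 + k)) p k t r (t + r) ltac:(lia) ltac:(lra) ltac:(lra)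
    ltac:(lra) ltac:(lra)) as H.
  pose proof (B_nonneg (p + (2 + k))). pose proof (B_le_Bm (p + (2 + k)) Hp).
  pose proof (lam_pos (t + r) ltac:(lra)).
  pose proof (lam_le_sup_on t (t + r) (t + r) t_ge_T ltac:(lra)) as Hsup. fold Lsup in Hsup.
  pose proof (pow_lt t k ltac:(lra)). pose proof (pow_lt r p ltac:(lra)).
  assert (Hlam : lam (t + r) / (t + r) <= Lsup / r).
  { unfold Rdiv. apply Rmult_le_compat; try lra;
      [left; apply Rinv_0_lt_compat; lra|apply Rinv_le_contravar; lra]. }
  assert (Hln : 0 <= ln (t + r) - ln r <= t / r).
  { replace (t + r) with (r * (1 + t / r)) by (field; lra).
    assert (0 < t / r) by (apply Rdiv_lt_0_compat; lra).
    rewrite ln_mult, Rplus_minus_l by lra. split.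
    - rewrite <- ln_1. apply ln_le; lra.
    - pose proof (ln_le_sub_1 (1 + t / r) ltac:(lra)). lra. }
  assert (Htr : / t * (ln (t + r) - ln r) <= / r)
    by (apply Rle_trans with (/ t * (t / r)); [apply Rmult_le_compat_l;
        [left; apply Rinv_0_lt_compat|]; lra|right; field; lra]).
  rewrite Rabs_mult, (Rabs_right (r ^ p)) by lra.
  apply Rle_trans with (Bm * (Lsup / r) / (t ^ k * r ^ p) * / r * r ^ p).
  - apply Rmult_le_compat_r; [lra|]. eapply Rle_trans; [exact H|].
    apply Rmult_le_compat; [|apply Rmult_le_pos; [left; apply Rinv_0_lt_compat|]; lra| |exact Htr].
    + apply Rdiv_le_0_compat; [apply Rmult_le_pos; [|apply Rdiv_le_0_compat]|]; nra.
    + unfold Rdiv. apply Rmult_le_compat_r; [left; apply Rinv_0_lt_compat; nra|].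
      apply Rmult_le_compat; try lra. apply Rdiv_le_0_compat; lra.
  - right. unfold Y. field. repeat split; try apply pow_nonzero; lra.
Qed.

Lemma w1_deriv_far j : (k <= 8)%nat -> (j <= 3)%nat ->
  Rabs (w1_deriv k j t r) <= 54 * Bm / (r ^ (1 + j) * t ^ k) * Lsup.
Proof.
  intros Hk Hj.
  pose proof (Derive_n_lam_far_scaled 0 ltac:(lia)) as Ha2.
  pose proof (Derive_n_lam_far_scaled 1 ltac:(lia)) as Ha3.
  pose proof (tail_moment_far 0 ltac:(lia)) as Hb0.
  pose proof (tail_moment_far 1 ltac:(lia)) as Hb1.
  rewrite pow_O, Rmult_1_r in Ha2, Hb0. rewrite pow_1 in Ha3, Hb1.
  unfold w1_deriv.
  eapply Rle_trans; [apply (radial_formula_bound j _ _ _ _ _ _ _ _ r Y Hj ltac:(lra))|].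
  - exact Ha2.
  - exact Ha3.
  - exact (Derive_n_lam_far_scaled 2 ltac:(lia)).
  - exact (taylor_defect_far ltac:(lia)).
  - exact Hb0.
  - exact Hb1.
  - exact (tail_moment_far 2 ltac:(lia)).
  - exact (tail_moment_far 3 ltac:(lia)).
  - right. unfold Y. change (1 + j)%nat with (S j).
    field. repeat split; try apply pow_nonzero; lra.
Qed.

End Far.

End Estimates.

End Weight.

Lemma abs_le_of_ratio_le (d l c y : R) :
  0 < l -> 0 < y -> Rabs d / l <= c / y -> Rabs d <= c * l / y.
Proof.
  intros Hl Hy H. apply (Rmult_le_compat_r l) in H; [|lra].
  replace (Rabs d / l * l) with (Rabs d) in H by (field; lra).
  replace (c * l / y) with (c / y * l) by (field; lra). exact H.
Qed.

Lemma in_Lambda_weight nK nKh nC Crho lam Tl : in_Lambda nK nKh nC Crho lam Tl ->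
  100 < Tl /\ exists B : nat -> R,
    (forall x, Tl <= x -> 0 < lam x) /\
    (forall n x, Tl <= x -> is_derive (Derive_n lam n) x (Derive_n lam (S n) x)) /\
    (forall n x, Tl <= x -> Rabs (Derive_n lam n x) <= B n * lam x / x ^ n) /\
    (forall a b, Tl <= a -> a <= b -> lam b / b <= lam a / a).
Proof.
  intros [Hpos [Hsmooth [HTl [Cl [Cu [C2 [Ck
    [HCl [HCu [HC2 [_ [Hd1 [Hd2 [Hdk [HCu1 _]]]]]]]]]]]]]]].
  assert (Hpos' : forall x, Tl <= x -> 0 < lam x) by (intros; apply Hpos; lra).
  assert (Hder : forall n x, Tl <= x -> is_derive (Derive_n lam n) x (Derive_n lam (S n) x))
    by (intros n x Hx; apply Derive_correct, (Hsmooth (S n)); lra).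
  split; [exact HTl|].
  exists (fun n => match n with 0 => 1 | 1 => Rmax Cl Cu | 2 => C2 | _ => Ck n end).
  split; [exact Hpos'|]. split; [exact Hder|]. split.
  - intros n x Hx. pose proof (Hpos' x Hx).
    apply abs_le_of_ratio_le; [lra|apply pow_lt; lra|].
    destruct n as [|[|[|n]]].
    + simpl. rewrite Rabs_right by lra. right. field. lra.
    + destruct (Hd1 x Hx) as [Hlo Hhi].
      change (Derive_n lam 1 x) with (Derive lam x). rewrite pow_1.
      replace (Rabs (Derive lam x) / lam x) with (Rabs (Derive lam x / lam x))
        by (unfold Rdiv; rewrite Rabs_mult, Rabs_inv, (Rabs_right (lam x)) by lra; reflexivity).
      apply Rabs_le.
      pose proof (Rmax_l Cl Cu). pose proof (Rmax_r Cl Cu).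
      assert (Hx0 : 0 < / x) by (apply Rinv_0_lt_compat; lra). unfold Rdiv in *. nra.
    + apply Hd2. exact Hx.
    + apply Hdk; [lia|exact Hx].
  - apply (ratio_id_nonincreasing lam Tl); [lra|exact Hpos'| |].
    + intros x Hx. apply (Hder 0%nat x Hx).
    + intros x Hx. pose proof (Hpos' x Hx). destruct (Hd1 x Hx) as [_ Hhi].
      apply (Rmult_le_compat_r (lam x * x)) in Hhi; [|nra].
      replace (Derive lam x / lam x * (lam x * x)) with (Derive lam x * x) in Hhi by (field; lra).
      replace (Cu / x * (lam x * x)) with (Cu * lam x) in Hhi by (field; lra).
      assert (Cu <= 1) by lra. nra.
Qed.

Theorem lemma4p2 :
  forall (nK nKh nC Crho : R), 0 <= nK -> 0 <= nKh -> 0 <= nC -> 0 < Crho ->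
  forall (lam : R -> R) (Tl : R), in_Lambda nK nKh nC Crho lam Tl ->
  forall T2 : R, exp 900 * (1 + Tl) <= T2 ->
  (forall t, T2 <= t -> Rpower t (2/3) * lam t < t / 100) ->
  exists C : R, 0 < C /\
    forall T0 : R, T2 <= T0 ->
    forall (k j : nat) (t r : R), (k <= 8)%nat -> (j <= 3)%nat ->
      T0 <= t -> 0 < r ->
      (r <= t ->
         Rabs (dw1 lam k j t r)
         <= C * Rpower r (1 - INR j) * lam t * (ln t + Rabs (ln r)) / t ^ (2 + k)) /\
      (t <= r ->
         Rabs (dw1 lam k j t r)
         <= C / (r ^ (1 + j) * t ^ k) * sup_on lam t (t + r)).
Proof.
  intros nK nKh nC Crho _ _ _ _ lam Tl HL T2 HT2 _.
  destruct (in_Lambda_weight _ _ _ _ _ _ HL) as [HTl [B [Hpos [Hder [Hbound Hratio]]]]].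
  destruct (bounded_upto B 13) as [Bm [HBm1 HBm]].
  exists (108 * Bm). split; [lra|].
  intros T0 HT0 k j t r Hk Hj Ht Hr.
  assert (He : exp 1 <= exp 900) by (left; apply exp_increasing; lra).
  assert (He1 : 1 <= exp 1) by (pose proof (exp_ineq1_le 1); lra).
  assert (Het : exp 1 <= t) by nra.
  assert (HTt : Tl < t) by nra.
  assert (Hlnt : 1 <= ln t) by (rewrite <- (ln_exp 1); apply ln_le; [apply exp_pos|exact Het]).
  rewrite (dw1_eq_w1_deriv lam Tl B) by (auto; lra).
  split; intros Hrt.
  - apply (w1_deriv_near lam Tl B); auto; lra.
  - eapply Rle_trans; [apply (w1_deriv_far lam Tl B) with (Bm := Bm); auto; lra|].
    assert (Hsup : lam t <= sup_on lam t (t + r)) by (apply (lam_le_sup_on lam Tl); auto; lra).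
    pose proof (Hpos t ltac:(lra)). pose proof (pow_lt r (1 + j) Hr).
    pose proof (pow_lt t k ltac:(lra)).
    apply Rmult_le_compat_r; [lra|]. unfold Rdiv.
    apply Rmult_le_compat_r; [left; apply Rinv_0_lt_compat; nra|lra].
Qed.
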